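(* Let $m,n\ge r\ge1$, let $L:\mathbb{R}^{m\times n}\to\mathbb{R}$ be differentiable, let $\lambda>0$ and $\tau>0$, and let $\mathcal{L}_{L2}(A,B)=L(AB^\top)+\frac{\lambda}{2}\left(\|A\|_F^2+\|B\|_F^2\right)$ for $A\in\mathbb{R}^{m\times r}$, $B\in\mathbb{R}^{n\times r}$. Let $(A(t),B(t))_{t\ge0}$ be a solution of the gradient flow $\tau\dot A=-\nabla_A\mathcal{L}_{L2}(A,B)$, $\tau\dot B=-\nabla_B\mathcal{L}_{L2}(A,B)$. Then $A(t)^\top A(t)-B(t)^\top B(t)$ converges exponentially fast to $0$ as $t\to\infty$.
   Context: $\|\cdot\|_F$ is the Frobenius norm. ''Converges exponentially fast to 0'' means its norm is bounded by $Ce^{-ct}$ for some constants $C,c>0$. *)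

From HB Require Import structures.
From mathcomp Require Import all_boot all_order all_algebra.
From mathcomp Require Import all_classical all_reals all_analysis.
Set Implicit Arguments. Unset Strict Implicit. Unset Printing Implicit Defensive.
Import Order.TTheory GRing.Theory Num.Theory.
Import numFieldNormedType.Exports.
Local Open Scope ring_scope.

Definition frob_inner (R : realType) (p q : nat) (G H : 'M[R]_(p, q)) : R :=
  \sum_(i < p) \sum_(j < q) G i j * H i j.

Definition frob_norm (R : realType) (p q : nat) (M : 'M[R]_(p, q)) : R :=
  Num.sqrt (\sum_(i < p) \sum_(j < q) M i j ^+ 2).

Definition is_gradient (R : realType) (p q : nat) (f : 'M[R]_(p, q) -> R)
  (X G : 'M[R]_(p, q)) : Prop :=
  differentiable f X /\ forall H : 'M[R]_(p, q), 'D_H f X = frob_inner G H.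

Definition LL2 (R : realType) (m n r : nat) (L : 'M[R]_(m, n) -> R) (lambda : R)
  (A : 'M[R]_(m, r)) (B : 'M[R]_(n, r)) : R :=
  L (A *m B^T) + lambda / 2 * (frob_norm A ^+ 2 + frob_norm B ^+ 2).

From HB Require Import structures.
From mathcomp Require Import all_boot all_order all_algebra.
From mathcomp Require Import all_classical all_reals all_analysis.
From mathcomp Require Import ring.
Import Order.TTheory GRing.Theory Num.Theory.
Import numFieldNormedType.Exports.
Local Open Scope ring_scope.
Local Open Scope classical_set_scope.

(* Testing the gradient-flow equations against the directions A E and B E^T,
   which perturb the product A B^T in the same way, cancels the loss L and
   leaves tau (A^T A' - B'^T B) = -lambda (A^T A - B^T B).  Adding the
   transpose, the imbalance D = A^T A - B^T B solves tau D' = -2 lambda D,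
   hence D(t) = exp(-2 lambda t / tau) D(0). *)

Section LinearDerive.
Context {R : numFieldType} {U V W : normedModType R}.

Lemma is_derive_linear_comp (f : {linear U -> V}) (g : V -> W) x v :
  derivable g (f x) (f v) -> is_derive x v (g \o f) ('D_(f v) g (f x)).
Proof.
have quotE : (fun h : R => h^-1 *: ((g \o f \o shift x) (h *: v) - (g \o f) x))
    = (fun h : R => h^-1 *: ((g \o shift (f x)) (h *: f v) - g (f x))).
  by apply/funext => h /=; rewrite [f (_ + _)]linearD [f (_ *: _)]linearZ.
by move=> dg; split; rewrite /derivable /derive quotE.
Qed.

Lemma is_derive_comp_linear (f : {linear V -> W}) (F : U -> V) x v :
  continuous f -> derivable F x v -> is_derive x v (f \o F) (f ('D_v F x)).
Proof.
move=> fc dF.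
have quotE : (fun h : R => h^-1 *: ((f \o F \o shift x) (h *: v) - (f \o F) x))
    = f \o (fun h : R => h^-1 *: ((F \o shift x) (h *: v) - F x)).
  by apply/funext => h /=; rewrite [f (_ *: _)]linearZ [f (_ - _)]linearB.
have cvgf := continuous_cvg _ (fc ('D_v F x)) dF.
split; rewrite /derivable /derive quotE; last by apply: cvg_lim => //; exact: cvgf.
by apply/cvg_ex; exists (f ('D_v F x)); exact: cvgf.
Qed.

End LinearDerive.

Lemma is_derive_linear {R : numFieldType} {U V : normedModType R}
  (f : {linear U -> V}) x v : is_derive x v f (f v).
Proof.
rewrite -[f v](derive_id (f x)); apply: is_derive_linear_comp; exact: derivable_id.
Qed.

Section MatrixEntry.
Variables (R : pzRingType) (p q : nat).

Definition mx_entry (i : 'I_p) (j : 'I_q) (M : 'M[R]_(p, q)) : R := M i j.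

Fact mx_entry_is_linear i j : linear (mx_entry i j : 'M[R]_(p, q) -> R^o).
Proof. by move=> a M N; rewrite /mx_entry !mxE. Qed.

HB.instance Definition _ i j :=
  GRing.isLinear.Build R 'M[R]_(p, q) R^o _ (mx_entry i j) (mx_entry_is_linear i j).

End MatrixEntry.
Arguments mx_entry {R p q} i j M.

Lemma mulmx_trmx_swap (R : comPzRingType) p q s (M : 'M[R]_(p, q))
    (N : 'M[R]_(p, s)) i j :
  (M^T *m N) i j = (N^T *m M) j i.
Proof. by rewrite !mxE; apply: eq_bigr => t _; rewrite !mxE mulrC. Qed.

Section Frobenius.
Variables (R : realType) (p q : nat).
Implicit Types G H M X : 'M[R]_(p, q).

Lemma frob_norm_sqr M : frob_norm M ^+ 2 = \sum_i \sum_j M i j ^+ 2.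
Proof.
by rewrite sqr_sqrtr // sumr_ge0 // => i _; rewrite sumr_ge0 // => j _; rewrite sqr_ge0.
Qed.

Lemma frob_normZ (a : R) M : frob_norm (a *: M) = `|a| * frob_norm M.
Proof.
rewrite /frob_norm -sqrtr_sqr -sqrtrM ?sqr_ge0 // mulr_sumr.
by congr Num.sqrt; apply: eq_bigr => i _; rewrite mulr_sumr;
  apply: eq_bigr => j _; rewrite mxE exprMn.
Qed.

Lemma frob_inner_mul_delta s G (M : 'M[R]_(p, s)) k l :
  frob_inner G (M *m delta_mx k l) = (M^T *m G) k l.
Proof.
rewrite /frob_inner mxE; apply: eq_bigr => i _.
rewrite (bigD1 l) //= big1 ?addr0 => [|j /negbTE jl]; rewrite !mxE.
  rewrite (bigD1 k) //= big1 ?addr0 => [|t /negbTE tk]; rewrite !mxE ?tk ?mulr0 //.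
  by rewrite !eqxx mulr1 mulrC.
by rewrite big1 ?mulr0 // => t _; rewrite mxE jl andbF mulr0.
Qed.

Lemma is_derive_frob_norm_sqr X H :
  is_derive X H (fun M => frob_norm M ^+ 2) (2 * frob_inner X H).
Proof.
have -> : (fun M => frob_norm M ^+ 2) = \sum_i \sum_j (mx_entry i j)^+2.
  apply/funext => M; rewrite frob_norm_sqr !fct_sumE.
  by apply: eq_bigr => i _; rewrite fct_sumE.
apply: is_derive_eq.
  apply: is_derive_sum => i; apply: is_derive_sum => j.
  exact/is_deriveX/is_derive_linear.
rewrite /frob_inner mulr_sumr; apply: eq_bigr => i _.
by rewrite mulr_sumr; apply: eq_bigr => j _; rewrite /mx_entry /= mulrA.
Qed.

End Frobenius.

Lemma gradient_balance (R : realType) p q s (P : 'M[R]_(p, q) -> R) (lambda : R)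
    (A GA : 'M[R]_(p, s)) (B GB : 'M[R]_(q, s)) :
  (forall H, frob_inner GA H = P (H *m B^T) + lambda * frob_inner A H) ->
  (forall K, frob_inner GB K = P (A *m K^T) + lambda * frob_inner B K) ->
  A^T *m GA - GB^T *m B = lambda *: (A^T *m A - B^T *m B).
Proof.
move=> hGA hGB; apply/matrixP => k l.
(* Both test directions perturb the product [A *m B^T] by [A *m delta_mx k l *m B^T],
   so the terms coming from [P] cancel. *)
have := hGA (A *m delta_mx k l); have := hGB (B *m delta_mx l k).
rewrite !frob_inner_mul_delta trmx_mul trmx_delta mulmxA => eB eA.
rewrite [(B^T *m GB) l k]mulmx_trmx_swap [(B^T *m B) l k]mulmx_trmx_swap in eB.
have subE (M N : 'M[R]_s) : (M - N) k l = M k l - N k l by rewrite !mxE.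
have scaleE (M : 'M[R]_s) : (lambda *: M) k l = lambda * M k l by rewrite !mxE.
by rewrite scaleE !subE eA eB; ring.
Qed.

Section RegularizedLoss.
Variables (R : realType) (m n r : nat) (L : 'M[R]_(m, n) -> R) (lambda : R).

Lemma is_derive_LL2_l (A H : 'M[R]_(m, r)) (B : 'M[R]_(n, r)) :
  differentiable L (A *m B^T) ->
  is_derive A H (fun A' => LL2 L lambda A' B)
    ('D_(H *m B^T) L (A *m B^T) + lambda * frob_inner A H).
Proof.
move=> dL.
have -> : (fun A' => LL2 L lambda A' B) = L \o mulmxr B^T
    + (lambda / 2) \*: ((fun M => frob_norm M ^+ 2) + cst (frob_norm B ^+ 2)).
  by apply/funext => A'.
apply: is_derive_eq.
  apply: is_deriveD; last apply/is_deriveZ/is_deriveD.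
    exact/is_derive_linear_comp/diff_derivable.
  exact: is_derive_frob_norm_sqr.
by rewrite /= addr0 /GRing.scale /= mulrA divfK // pnatr_eq0.
Qed.

Lemma is_derive_LL2_r (A : 'M[R]_(m, r)) (B K : 'M[R]_(n, r)) :
  differentiable L (A *m B^T) ->
  is_derive B K (fun B' => LL2 L lambda A B')
    ('D_(A *m K^T) L (A *m B^T) + lambda * frob_inner B K).
Proof.
move=> dL.
have -> : (fun B' => LL2 L lambda A B') = L \o (mulmx A \o trmx)
    + (lambda / 2) \*: (cst (frob_norm A ^+ 2) + (fun M => frob_norm M ^+ 2)).
  by apply/funext => B'.
apply: is_derive_eq.
  apply: is_deriveD; last apply/is_deriveZ/is_deriveD.
    exact/is_derive_linear_comp/diff_derivable.
  exact: is_derive_frob_norm_sqr.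
by rewrite /= add0r /GRing.scale /= mulrA divfK // pnatr_eq0.
Qed.

End RegularizedLoss.

Section MatrixCurves.
Variable R : realType.

Lemma is_derive_mx_entry p q (F : R -> 'M[R]_(p, q)) t i j :
  derivable F t 1 -> is_derive t 1 (fun x => F x i j) (derive1 F t i j).
Proof.
rewrite derive1E => dF.
exact: (@is_derive_comp_linear _ _ _ _ (mx_entry i j) F t 1
  (@coord_continuous _ _ _ i j) dF).
Qed.

Lemma is_derive_trmx_mulmx_entry p q s (F : R -> 'M[R]_(p, q))
    (G : R -> 'M[R]_(p, s)) t i j :
  derivable F t 1 -> derivable G t 1 ->
  is_derive t 1 (fun x => ((F x)^T *m G x) i j)
    (((derive1 F t)^T *m G t + (F t)^T *m derive1 G t) i j).
Proof.
move=> dF dG.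
have -> : (fun x => ((F x)^T *m G x) i j)
    = \sum_k ((fun x => F x k i) * (fun x => G x k j)).
  by apply/funext => x; rewrite fct_sumE !mxE; apply: eq_bigr => k _; rewrite !mxE.
apply: is_derive_eq.
  by apply: is_derive_sum => k; apply: is_deriveM; apply: is_derive_mx_entry.
rewrite !mxE -big_split /=; apply: eq_bigr => k _.
by rewrite !mxE /GRing.scale /= addrC mulrC [G t k j * _]mulrC.
Qed.

Lemma continuous_trmx_mulmx_entry (T : topologicalType) p q s
    (F : T -> 'M[R]_(p, q)) (G : T -> 'M[R]_(p, s)) x i j :
  {for x, continuous F} -> {for x, continuous G} ->
  {for x, continuous (fun y => ((F y)^T *m G y) i j)}.
Proof.
move=> cF cG.
have entry (H : T -> 'M[R]_(p, _)) a b :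
    {for x, continuous H} -> {for x, continuous (fun y => H y a b)}.
  by move=> cH; exact: (continuous_cvg _ (@coord_continuous R _ _ a b (H x)) cH).
have -> : (fun y => ((F y)^T *m G y) i j)
    = \sum_k ((fun y => F y k i) * (fun y => G y k j)).
  by apply/funext => y; rewrite fct_sumE !mxE; apply: eq_bigr => k _; rewrite !mxE.
elim/big_ind: _ => [|f g cf cg|k _]; first exact: cst_continuous.
  exact: continuousD.
by apply: continuousM; apply: entry.
Qed.

End MatrixCurves.

Lemma linear_ode_solution (R : realType) (f : R -> R) (c : R) :
  {within `[0, +oo[, continuous f} ->
  (forall x : R, 0 < x -> is_derive x 1 f (- c * f x)) ->
  forall t : R, 0 <= t -> f t = expR (- (c * t)) * f 0.
Proof.
move=> fc df.
have dexp (x : R) : is_derive x 1 (fun s => expR (c * s)) (expR (c * x) * c).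
  apply: is_derive1_comp; apply: is_derive_eq (is_deriveZ c (is_derive_id x 1)) _.
  exact: mulr1.
pose g := (fun s => expR (c * s)) * f.
have dg (x : R) : 0 < x -> is_derive x 1 g 0.
  move=> x0; apply: is_derive_eq (is_deriveM (dexp x) (df x x0)) _.
  by rewrite /GRing.scale /=; ring.
have gc : {within `[0, +oo[, continuous g}.
  move=> s; apply: continuousM (fc s); apply: continuous_subspaceT => y.
  by apply/differentiable_continuous/derivable1_diffP; case: (dexp y).
move=> t; rewrite le_eqVlt => /predU1P[<-|t0]; first by rewrite mulr0 oppr0 expR0 mul1r.
have [z|| z _] := @MVT R g (fun=> 0) 0 t t0.
- by rewrite in_itv => /andP[z0 _]; apply: dg.
- by apply: continuous_subspaceW gc => z /=; rewrite !in_itv /= => /andP[->].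
rewrite mul0r => /eqP; rewrite subr_eq0 /g mulrfctE mulr0 expR0 mul1r => /eqP <-.
by rewrite mulrA -expRD addNr expR0 mul1r.
Qed.

Section GradientFlow.
Context {R : realType} {m n r : nat} {L : 'M[R]_(m, n) -> R} {lambda tau : R}.
Context {A : R -> 'M[R]_(m, r)} {B : R -> 'M[R]_(n, r)}.
Hypothesis hL : forall X, differentiable L X.
Hypothesis htau : 0 < tau.
Hypothesis hA : forall t, 0 < t -> derivable A t 1 /\
  is_gradient (fun A' => LL2 L lambda A' (B t)) (A t) (- (tau *: derive1 A t)).
Hypothesis hB : forall t, 0 < t -> derivable B t 1 /\
  is_gradient (fun B' => LL2 L lambda (A t) B') (B t) (- (tau *: derive1 B t)).
Hypothesis hAc : {within `[0, +oo[, continuous A}.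
Hypothesis hBc : {within `[0, +oo[, continuous B}.

Definition imbalance t : 'M[R]_r := (A t)^T *m A t - (B t)^T *m B t.

Lemma imbalance_rate (t : R) : 0 < t ->
  tau *: ((A t)^T *m derive1 A t - (derive1 B t)^T *m B t) = - lambda *: imbalance t.
Proof.
move=> t0; have [_ [_ gA]] := hA t t0; have [_ [_ gB]] := hB t t0.
have : (A t)^T *m (- (tau *: derive1 A t)) - (- (tau *: derive1 B t))^T *m B t
    = lambda *: imbalance t.
  apply: (@gradient_balance _ _ _ _ (fun V => 'D_V L (A t *m (B t)^T))) => [H|K].
  - by rewrite -gA; apply/derive_val/is_derive_LL2_l.
  - by rewrite -gB; apply/derive_val/is_derive_LL2_r.
rewrite mulmxN -scalemxAr linearN /= mulNmx [(_ *: _)^T]linearZ /= -scalemxAl.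
rewrite opprK => balance.
by rewrite scaleNr -balance opprD opprK scalerBr addrC.
Qed.

Lemma imbalance_sym t : (imbalance t)^T = imbalance t.
Proof. by rewrite linearB /= !trmx_mul !trmxK. Qed.

Lemma imbalance_entryE k l : (fun s => imbalance s k l)
  = (fun s => ((A s)^T *m A s) k l) - (fun s => ((B s)^T *m B s) k l).
Proof. by apply/funext => s; rewrite -[LHS]/(mx_entry k l _) linearB. Qed.

Lemma is_derive_imbalance_entry (t : R) k l : 0 < t ->
  is_derive t 1 (fun s => imbalance s k l) (- (2 * lambda / tau) * imbalance t k l).
Proof.
move=> t0; have [dA _] := hA t t0; have [dB _] := hB t t0.
rewrite imbalance_entryE; apply: is_derive_eq.
  by apply: is_deriveB; apply: is_derive_trmx_mulmx_entry.
set X := (A t)^T *m derive1 A t; set Y := (derive1 B t)^T *m B t.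
have -> : forall M N : 'M[R]_r, M k l - N k l = mx_entry k l (M - N).
  by move=> M N; rewrite linearB.
have -> : (derive1 A t)^T *m A t + X - (Y + (B t)^T *m derive1 B t)
    = (X - Y) + (X - Y)^T.
  by rewrite linearB /= !trmx_mul !trmxK opprD [_ + X]addrC addrACA.
have tau_neq0 : tau != 0 by rewrite gt_eqF.
have scaleE a M : a * mx_entry k l M = mx_entry k l (a *: M) by rewrite /mx_entry mxE.
apply: (mulfI tau_neq0); rewrite scaleE scalerDr -[tau *: (X - Y)^T]linearZ /=.
rewrite (imbalance_rate _ t0) [(_ *: _)^T]linearZ /= imbalance_sym -scalerDl -scaleE.
by rewrite /mx_entry; field.
Qed.

Lemma imbalance_expR t : 0 <= t ->
  imbalance t = expR (- (2 * lambda / tau * t)) *: imbalance 0.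
Proof.
move=> t0; apply/matrixP => k l; rewrite [RHS]mxE.
apply: (@linear_ode_solution R (fun s => imbalance s k l)) t0 => [s|x x0];
  last exact: is_derive_imbalance_entry.
by rewrite imbalance_entryE; apply: continuousB;
  apply: continuous_trmx_mulmx_entry; [exact: hAc | exact: hAc | exact: hBc | exact: hBc].
Qed.

End GradientFlow.
Arguments imbalance {R m n r} A B t.

Theorem lemma2 (R : realType) (m n r : nat)
  (hrm : (r <= m)%N) (hrn : (r <= n)%N) (hr : (1 <= r)%N)
  (L : 'M[R]_(m, n) -> R) (hL : forall X, differentiable L X)
  (lambda tau : R) (hlambda : 0 < lambda) (htau : 0 < tau)
  (A : R -> 'M[R]_(m, r)) (B : R -> 'M[R]_(n, r))
  (hAc : {within `[0, +oo[, continuous A})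
  (hBc : {within `[0, +oo[, continuous B})
  (hA : forall t, 0 < t -> derivable A t 1 /\
          is_gradient (fun A' => LL2 L lambda A' (B t)) (A t) (- (tau *: derive1 A t)))
  (hB : forall t, 0 < t -> derivable B t 1 /\
          is_gradient (fun B' => LL2 L lambda (A t) B') (B t) (- (tau *: derive1 B t))) :
  exists C c : R, 0 < C /\ 0 < c /\
    forall t, 0 <= t ->
      frob_norm ((A t)^T *m A t - (B t)^T *m B t) <= C * expR (- (c * t)).
Proof.
exists (frob_norm (imbalance A B 0) + 1), (2 * lambda / tau).
split; first by apply: ltr_wpDl; [exact: sqrtr_ge0 | exact: ltr01].
split; first by rewrite divr_gt0 // mulr_gt0.
move=> t t0; rewrite -[_ - _]/(imbalance A B t).
rewrite (imbalance_expR hL htau hA hB hAc hBc t t0) frob_normZ ger0_norm ?expR_ge0 //.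
by rewrite mulrC ler_wpM2r ?expR_ge0 // lerDl.
Qed.
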